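(* Let $\mathcal L$ be an MV-algebra and let $P\subsetneq Q$ be prime implication filters. For all $\mathcal F,\mathcal G\in\mathrm{PSpec}(P)$, $$q_Q(\mathcal F^+)=\lnot\, q_Q(\mathcal F)\quad\text{and}\quad q_Q(\mathcal F\sqsubseteq\!\!\to\mathcal G)=q_Q(\mathcal F)\to q_Q(\mathcal G),$$ where $\lnot$ and $\to$ on the right are the operations of $\mathcal L/Q$. Thus $\mathcal F\mapsto q_Q(\mathcal F)$ induces an MV-morphism $\hat\eta_{PQ}\colon\hat{\mathcal L}_P\to\mathcal L/Q$.
   Context: $\mathcal L=(L,\oplus,\lnot,0)$ is an MV-algebra. We write $1=\lnot0$, $x\otimes y=\lnot(\lnot x\oplus\lnot y)$, and $x\to y=\lnot x\oplus y$. An implication filter is a set $P\ni1$ closed under modus ponens. $\mathcal L/P$ is the quotient by $x\sim_P y\iff x\to y,\ y\to x\in P$, with cosets $[x]_P$. $P$ is prime if $\mathcal L/P$ is linearly ordered. A lattice filter is a nonempty upward-closed subset closed under $\wedge$; it is prime if it is proper and $a\vee b\in\mathcal F$ implies $a\in\mathcal F$ or $b\in\mathcal F$. For upward-closed $\mathcal F$ and $a\in L$, let $\mathcal F_a=\{z:z\to a\notin\mathcal F\}$, $\mathcal F^+=\mathcal F_0$, and $\mathcal K(\mathcal F)=\{z:\forall a\notin\mathcal F,\ z\to a\notin\mathcal F\}$. $\mathrm{PSpec}(P)$ is the set of prime lattice filters with kernel $P$. For $\mathcal F\subseteq\mathcal G$ we put $\mathcal F\sqsubseteq\!\!\to\mathcal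 G=\bigcap_{a\notin\mathcal G}\mathcal F_a$, and in general $\mathcal F\sqsubseteq\!\!\to\mathcal G:=(\mathcal F\cap\mathcal G)\sqsubseteq\!\!\to\mathcal G$. For a prime lattice filter $\mathcal F$ and a prime implication filter $Q$ properly containing $\mathcal K(\mathcal F)$, $q_Q(\mathcal F)$ denotes the unique $Q$-coset $C$ with $C\cap\mathcal F\ne\emptyset\ne C\setminus\mathcal F$. $\hat{\mathcal L}_P$ is $\mathrm{PSpec}(P)$ modulo the relation $\mathcal F\equiv\mathcal G\iff\mathcal F\sqsubseteq\!\!\to\mathcal G=\mathcal G\sqsubseteq\!\!\to\mathcal F=P$, with operations ${}^+$ and $\sqsubseteq\!\!\to$. *)

From Stdlib Require Import ClassicalEpsilon.

Record MVAlgebra := {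
  carrier :> Type;
  oplus : carrier -> carrier -> carrier;
  mvneg : carrier -> carrier;
  mvzero : carrier;
  oplus_assoc : forall x y z, oplus x (oplus y z) = oplus (oplus x y) z;
  oplus_comm : forall x y, oplus x y = oplus y x;
  oplus_zero : forall x, oplus x mvzero = x;
  neg_neg : forall x, mvneg (mvneg x) = x;
  oplus_one : forall x, oplus x (mvneg mvzero) = mvneg mvzero;
  mv_luk : forall x y,
    oplus (mvneg (oplus (mvneg x) y)) y = oplus (mvneg (oplus (mvneg y) x)) x
}.

Arguments oplus {_}.
Arguments mvneg {_}.
Arguments mvzero {_}.

Section MV.
Variable L : MVAlgebra.

Definition mvone : L := mvneg mvzero.
Definition mvimp (x y : L) : L := oplus (mvneg x) y.
Definition mvjoin (x y : L) : L := oplus (mvneg (oplus (mvneg x) y)) y.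
Definition mvmeet (x y : L) : L := mvneg (mvjoin (mvneg x) (mvneg y)).
Definition mvle (x y : L) : Prop := mvimp x y = mvone.

Definition impl_filter (P : L -> Prop) : Prop :=
  P mvone /\ (forall x y, P x -> P (mvimp x y) -> P y).

Definition equivP (P : L -> Prop) (x y : L) : Prop :=
  P (mvimp x y) /\ P (mvimp y x).

Definition coset (P : L -> Prop) (x : L) : L -> Prop := fun z => equivP P x z.

(* P is prime iff L/P is linearly ordered ([x] <= [y] iff x -> y in P) *)
Definition prime_impl_filter (P : L -> Prop) : Prop :=
  impl_filter P /\ (forall x y, P (mvimp x y) \/ P (mvimp y x)).

Definition upward_closed (F : L -> Prop) : Prop :=
  forall x y, F x -> mvle x y -> F y.

Definition lattice_filter (F : L -> Prop) : Prop :=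
  (exists x, F x) /\ upward_closed F /\ (forall x y, F x -> F y -> F (mvmeet x y)).

Definition prime_lattice_filter (F : L -> Prop) : Prop :=
  lattice_filter F /\ (exists a, ~ F a) /\
  (forall a b, F (mvjoin a b) -> F a \/ F b).

Definition Fsub (F : L -> Prop) (a : L) : L -> Prop := fun z => ~ F (mvimp z a).
Definition Fplus (F : L -> Prop) : L -> Prop := Fsub F mvzero.
Definition kernel (F : L -> Prop) : L -> Prop :=
  fun z => forall a, ~ F a -> ~ F (mvimp z a).

Definition PSpec (P F : L -> Prop) : Prop :=
  prime_lattice_filter F /\ kernel F = P.

(* F [=-> G := (F /\ G) [=-> G = intersection over a notin G of (F /\ G)_a *)
Definition sqimp (F G : L -> Prop) : L -> Prop :=
  fun z => forall a, ~ G a -> Fsub (fun w => F w /\ G w) a z.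

(* F == G in \hat L_P *)
Definition hat_equiv (P F G : L -> Prop) : Prop :=
  sqimp F G = P /\ sqimp G F = P.

Definition boundary_coset (Q F C : L -> Prop) : Prop :=
  (exists x, C = coset Q x) /\ (exists z, C z /\ F z) /\ (exists z, C z /\ ~ F z).

(* q_Q(F): the (unique, under the paper's hypotheses) boundary Q-coset of F *)
Definition qQ (Q F : L -> Prop) : L -> Prop :=
  epsilon (inhabits (fun _ : L => False)) (boundary_coset Q F).

(* operations of L/Q on cosets: ~[x] = [~x], [x] -> [y] = [x -> y] *)
Definition coset_neg (Q C : L -> Prop) : L -> Prop :=
  fun z => exists x, C x /\ equivP Q z (mvneg x).
Definition coset_imp (Q C D : L -> Prop) : L -> Prop :=
  fun z => exists x y, C x /\ D y /\ equivP Q z (mvimp x y).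

End MV.

Arguments mvone {_}.

(* Since the kernel
   of F is P, F is "P-closed": F x and x → y ∈ P imply F y.  Three facts drive
   everything:
   (a) A Q-coset [x]_Q containing u ∈ F and v ∉ F ("x straddles F") is unique up
       to ~_Q, so q_Q(F) = [x]_Q as soon as x straddles F (lemma [qQ_straddle]);
       uniqueness uses the linearity of L/P.
   (b) Some x straddles F: any q ∈ Q \ P is not in K(F), which yields a ∉ F with
       q → a ∈ F, and a ~_Q q → a (lemma [pspec_straddle]).
   (c) Two P-closed sets are comparable under inclusion (P is prime).
   Then ¬x straddles F^+, and x → y straddles F ⊑→ G (by a case analysis along
   (c)), giving the two equations; finally, if F ⊑→ G = P with F ⊆ G, the
   element a straddling F also straddles G, whence q_Q(F) = q_Q(G). *)
From Stdlib Require Import Classical ClassicalEpsilon FunctionalExtensionality PropExtensionality.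

Notation "x ==> y" := (mvimp _ x y) (at level 55, right associativity).

(** * MV-algebra arithmetic *)
Section MVArithmetic.
Context {L : MVAlgebra}.
Implicit Types x y z : L.

Lemma oplus_lcomm x y z : oplus x (oplus y z) = oplus y (oplus x z).
Proof. rewrite !oplus_assoc, (oplus_comm _ x y). reflexivity. Qed.

Lemma neg_one : mvneg (mvone : L) = mvzero.
Proof. apply neg_neg. Qed.

Lemma zero_oplus x : oplus mvzero x = x.
Proof. rewrite oplus_comm. apply oplus_zero. Qed.

(* ¬x ⊕ x = 1: Łukasiewicz's axiom instantiated at y = 1. *)
Lemma neg_oplus_self x : oplus (mvneg x) x = mvone.
Proof.
  pose proof (mv_luk L x mvone) as H. unfold mvone in *.
  rewrite oplus_one, neg_neg, zero_oplus in H. rewrite <- H. reflexivity.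
Qed.

Lemma imp_refl x : x ==> x = mvone.
Proof. apply neg_oplus_self. Qed.

Lemma imp_one x : x ==> mvone = mvone.
Proof. apply oplus_one. Qed.

Lemma one_imp x : mvone ==> x = x.
Proof. unfold mvimp. rewrite neg_one. apply zero_oplus. Qed.

(* F^+ = F_0 is the preimage of F under ¬, since x → 0 = ¬x. *)
Lemma imp_zero x : x ==> mvzero = mvneg x.
Proof. apply oplus_zero. Qed.

Lemma imp_exch x y z : x ==> (y ==> z) = y ==> (x ==> z).
Proof. apply oplus_lcomm. Qed.

Lemma imp_K x y : x ==> (y ==> x) = mvone.
Proof. rewrite imp_exch, imp_refl. apply imp_one. Qed.

Lemma imp_contra x y : mvneg x ==> mvneg y = y ==> x.
Proof. unfold mvimp. rewrite neg_neg. apply oplus_comm. Qed.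

Lemma le_join_l x y : x ==> mvjoin L x y = mvone.
Proof.
  unfold mvjoin, mvimp. rewrite mv_luk, oplus_lcomm, neg_oplus_self. apply oplus_one.
Qed.

Lemma imp_trans_l x y z : (x ==> y) ==> ((y ==> z) ==> (x ==> z)) = mvone.
Proof.
  unfold mvimp. set (a := mvneg x).
  rewrite (oplus_comm _ a z), (oplus_assoc _ (mvneg (oplus (mvneg y) z)) z a), mv_luk.
  rewrite <- oplus_assoc, (oplus_comm _ y a), oplus_lcomm, neg_oplus_self.
  apply oplus_one.
Qed.

Lemma imp_trans_r x y z : (y ==> z) ==> ((x ==> y) ==> (x ==> z)) = mvone.
Proof. rewrite imp_exch. apply imp_trans_l. Qed.

End MVArithmetic.

(** * Implication filters and their cosets *)
Section ImplicationFilter.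
Context {L : MVAlgebra} (Q : L -> Prop).
Hypothesis HQ : impl_filter L Q.
Implicit Types x y z a b : L.

Lemma filter_mono x y : Q x -> x ==> y = mvone -> Q y.
Proof. intros Qx E. apply (proj2 HQ x y Qx). rewrite E. apply HQ. Qed.

Lemma filter_trans x y z : Q (x ==> y) -> Q (y ==> z) -> Q (x ==> z).
Proof.
  intros H1 H2. pose proof (filter_mono _ _ H1 (imp_trans_l x y z)).
  apply (proj2 HQ _ _ H2); assumption.
Qed.

Lemma filter_imp_mono x y a b :
  Q (a ==> x) -> Q (y ==> b) -> Q ((x ==> y) ==> (a ==> b)).
Proof.
  intros H1 H2.
  pose proof (filter_mono _ _ H1 (imp_trans_l a x y)).
  pose proof (filter_mono _ _ H2 (imp_trans_r a y b)).
  eapply filter_trans; eassumption.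
Qed.

Lemma equivP_refl x : equivP L Q x x.
Proof. split; rewrite imp_refl; apply HQ. Qed.

Lemma equivP_sym x y : equivP L Q x y -> equivP L Q y x.
Proof. intros [? ?]; split; assumption. Qed.

Lemma equivP_trans x y z : equivP L Q x y -> equivP L Q y z -> equivP L Q x z.
Proof. intros [? ?] [? ?]; split; eapply filter_trans; eassumption. Qed.

Lemma equivP_neg x y : equivP L Q x y -> equivP L Q (mvneg x) (mvneg y).
Proof. intros [? ?]; split; rewrite imp_contra; assumption. Qed.

Lemma equivP_imp x y a b :
  equivP L Q x a -> equivP L Q y b -> equivP L Q (x ==> y) (a ==> b).
Proof. intros [? ?] [? ?]; split; apply filter_imp_mono; assumption. Qed.

Lemma equivP_mem a b : Q a -> Q b -> equivP L Q a b.
Proof. intros Qa Qb; split; [apply (filter_mono b) | apply (filter_mono a)];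
  try assumption; apply imp_K. Qed.

Lemma equivP_imp_left q a : Q q -> equivP L Q a (q ==> a).
Proof.
  intros Qq. split.
  - rewrite imp_K. apply HQ.
  - apply (filter_mono q); [assumption | apply le_join_l].
Qed.

Lemma coset_eq x y : equivP L Q x y -> coset L Q x = coset L Q y.
Proof.
  intros H. apply functional_extensionality; intro z.
  apply propositional_extensionality. unfold coset; split; intro.
  - eapply equivP_trans; [apply equivP_sym|]; eassumption.
  - eapply equivP_trans; eassumption.
Qed.

Lemma coset_negE x : coset_neg L Q (coset L Q x) = coset L Q (mvneg x).
Proof.
  apply functional_extensionality; intro z. apply propositional_extensionality.
  unfold coset_neg, coset. split.
  - intros [w [Hw Hz]]. eapply equivP_trans; [apply equivP_neg, Hw | apply equivP_sym, Hz].
  - intros H. exists x. split; [apply equivP_refl | apply equivP_sym, H].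
Qed.

Lemma coset_impE x y :
  coset_imp L Q (coset L Q x) (coset L Q y) = coset L Q (x ==> y).
Proof.
  apply functional_extensionality; intro z. apply propositional_extensionality.
  unfold coset_imp, coset. split.
  - intros [a [b [Ha [Hb Hz]]]].
    eapply equivP_trans; [apply equivP_imp; eassumption | apply equivP_sym, Hz].
  - intros H. exists x, y.
    split; [|split]; [apply equivP_refl | apply equivP_refl | apply equivP_sym, H].
Qed.

End ImplicationFilter.

(** * Boundary cosets of P-closed sets *)

(* F is closed under P-implication; this is what "kernel F = P" buys us. *)
Definition Pclosed {L : MVAlgebra} (P F : L -> Prop) : Prop :=
  forall x y, F x -> P (x ==> y) -> F y.

Definition straddles {L : MVAlgebra} (Q F : L -> Prop) (x : L) : Prop :=
  exists u v, equivP L Q x u /\ equivP L Q x v /\ F u /\ ~ F v.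

Section Boundary.
Context {L : MVAlgebra} (P Q : L -> Prop).
Hypothesis HP : prime_impl_filter L P.
Hypothesis HQ : impl_filter L Q.
Hypothesis PsubQ : forall z, P z -> Q z.

(* Two P-closed sets are comparable, because L/P is linearly ordered. *)
Lemma Pclosed_comparable (F G : L -> Prop) :
  Pclosed P F -> Pclosed P G -> (forall z, F z -> G z) \/ (forall z, G z -> F z).
Proof.
  intros CF CG. apply NNPP; intro N. apply not_or_and in N. destruct N as [N1 N2].
  apply not_all_ex_not in N1, N2. destruct N1 as [x N1], N2 as [y N2].
  apply imply_to_and in N1, N2. destruct N1, N2.
  destruct (proj2 HP x y); eauto.
Qed.

(* (a) A straddling coset is unique: for u ∈ F and v ∉ F we have v → u ∈ P,
   so the "in" part of one coset lies Q-above the "out" part of the other. *)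
Lemma straddle_unique (F : L -> Prop) x1 x2 :
  Pclosed P F -> straddles Q F x1 -> straddles Q F x2 -> equivP L Q x1 x2.
Proof.
  intros CF [u1 [v1 [[a1 b1] [[c1 d1] [Fu1 Fv1]]]]] [u2 [v2 [[a2 b2] [[c2 d2] [Fu2 Fv2]]]]].
  assert (out_in : forall u v, F u -> ~ F v -> Q (v ==> u)).
  { intros u v Fu Fv. destruct (proj2 HP u v) as [h|h]; [exfalso; eauto | auto]. }
  split.
  - apply filter_trans with v1; [assumption | assumption |].
    apply filter_trans with u2; [assumption | apply out_in; assumption | assumption].
  - apply filter_trans with v2; [assumption | assumption |].
    apply filter_trans with u1; [assumption | apply out_in; assumption | assumption].
Qed.

Lemma qQ_straddle (F : L -> Prop) x :
  Pclosed P F -> straddles Q F x -> qQ L Q F = coset L Q x.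
Proof.
  intros CF Sx.
  assert (B : boundary_coset L Q F (coset L Q x)).
  { destruct Sx as [u [v [Hu [Hv [Fu Fv]]]]]. split; [eauto | split; eauto]. }
  pose proof (epsilon_spec (inhabits (fun _ : L => False)) (boundary_coset L Q F)
     (ex_intro _ _ B)) as B'.
  fold (qQ L Q F) in B'.
  destruct B' as [[x' Ex] [[u [Cu Fu]] [v [Cv Fv]]]].
  rewrite Ex in *. apply coset_eq; [assumption|].
  apply straddle_unique with F; [assumption | | assumption].
  exists u, v. split; [exact Cu | split; [exact Cv | split; assumption]].
Qed.

End Boundary.

Section PSpec.
Context {L : MVAlgebra} (P F : L -> Prop).
Hypothesis HF : PSpec L P F.

Lemma pspec_up : upward_closed L F.
Proof. apply HF. Qed.

Lemma pspec_prime a b : F (mvjoin L a b) -> F a \/ F b.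
Proof. apply HF. Qed.

(* If x ∈ F and x → y ∈ P = K(F), then y ∈ F: otherwise y ∉ F forces
   (x → y) → y = x ∨ y ∉ F, contradicting x ∈ F and upward closure. *)
Lemma pspec_closed : Pclosed P F.
Proof.
  intros x y Fx Pxy. destruct HF as [_ K]. rewrite <- K in Pxy.
  apply NNPP; intro Fy. apply (Pxy y Fy). apply (pspec_up x); [assumption|].
  apply le_join_l.
Qed.

Lemma pspec_straddle (Q : L -> Prop) q :
  impl_filter L Q -> Q q -> ~ P q -> exists a, straddles Q F a.
Proof.
  intros HQ Qq Pq. destruct HF as [_ K]. rewrite <- K in Pq.
  apply not_all_ex_not in Pq. destruct Pq as [a Ha].
  apply imply_to_and in Ha. destruct Ha as [Fa Ha]. apply NNPP in Ha.
  exists a, (q ==> a), a.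
  split; [apply equivP_imp_left | split; [apply equivP_refl|]]; auto.
Qed.

End PSpec.

Section Operations.
Context {L : MVAlgebra} (P : L -> Prop).
Hypothesis HP : impl_filter L P.

Lemma Fplus_closed (F : L -> Prop) : Pclosed P F -> Pclosed P (Fplus L F).
Proof.
  intros CF z y Hz Pzy Fy. apply Hz. apply (CF (y ==> mvzero)); [assumption|].
  eapply filter_mono; [eassumption | eassumption | apply imp_trans_l].
Qed.

Lemma sqimp_closed (F G : L -> Prop) :
  Pclosed P F -> Pclosed P G -> Pclosed P (sqimp L F G).
Proof.
  intros CF CG z y Hz Pzy a Ga [Fya Gya]. apply (Hz a Ga).
  assert (P ((y ==> a) ==> (z ==> a)))
    by (eapply filter_mono; [eassumption | eassumption | apply imp_trans_l]).
  split; eauto.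
Qed.

End Operations.

Lemma sqimp_one {L : MVAlgebra} (F G : L -> Prop) : sqimp L F G mvone.
Proof. intros a Ga [_ H]. rewrite one_imp in H. auto. Qed.

(* If w ∈ F ∩ G and b ∉ G then w → b ∉ F ⊑→ G (as w ≤ (w → b) → b). *)
Lemma sqimp_out {L : MVAlgebra} (F G : L -> Prop) w b :
  upward_closed L F -> upward_closed L G ->
  F w -> G w -> ~ G b -> ~ sqimp L F G (w ==> b).
Proof.
  intros UF UG Fw Gw Gb H. apply (H b Gb).
  split; [apply (UF w) | apply (UG w)]; auto; apply le_join_l.
Qed.

(** * The three equations *)
Section Equations.
Context {L : MVAlgebra} (P Q : L -> Prop).
Hypothesis HP : prime_impl_filter L P.
Hypothesis HQ : impl_filter L Q.
Hypothesis PsubQ : forall z, P z -> Q z.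

(* q_Q(F^+) = ¬q_Q(F): negation swaps the two witnesses of a straddling x. *)
Lemma qQ_Fplus (F : L -> Prop) x :
  Pclosed P F -> straddles Q F x -> qQ L Q (Fplus L F) = coset_neg L Q (qQ L Q F).
Proof.
  intros CF Sx. rewrite (qQ_straddle P Q HP HQ PsubQ F x CF Sx), coset_negE by assumption.
  apply (qQ_straddle P Q); auto; [apply Fplus_closed; [apply HP | assumption]|].
  destruct Sx as [u [v [Hu [Hv [Fu Fv]]]]].
  exists (mvneg v), (mvneg u).
  unfold Fplus, Fsub; cbv beta. rewrite !imp_zero, !neg_neg.
  split; [apply equivP_neg; assumption | split; [apply equivP_neg; assumption | split]].
  - exact Fv.
  - intros nFu; exact (nFu Fu).
Qed.

(* x → y straddles F ⊑→ G when F ⊆ G and x, y straddle F, G.  Either the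
   G-witness u_G lies in F, so x ~_Q y and [x → y] = [1]; or it does not,
   and v_F → u_G is inside F ⊑→ G by primality of F. *)
Lemma sqimp_straddle_sub (F G : L -> Prop) x y :
  PSpec L P F -> PSpec L P G -> (forall z, F z -> G z) ->
  straddles Q F x -> straddles Q G y -> straddles Q (sqimp L F G) (x ==> y).
Proof.
  intros SF SG FG Sx Sy.
  pose proof (pspec_closed P F SF) as CF.
  destruct Sx as [uF [vF [HuF [HvF [FuF FvF]]]]].
  destruct Sy as [uG [vG [HuG [HvG [GuG GvG]]]]].
  assert (out : ~ sqimp L F G (uF ==> vG))
    by (apply sqimp_out; auto; apply pspec_up with P; assumption).
  destruct (classic (F uG)) as [FuG | nFuG].
  - assert (Exy : equivP L Q x y).
    { apply (straddle_unique P Q HP HQ PsubQ F); [assumption | exists uF, vF | exists uG, vG].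
      - auto.
      - split; [|split; [|split]]; auto. }
    exists mvone, (uF ==> vG). split; [|split; [apply equivP_imp; auto | split]].
    + apply equivP_sym, equivP_mem; [assumption | apply HQ | apply Exy].
    + apply sqimp_one.
    + exact out.
  - exists (vF ==> uG), (uF ==> vG).
    split; [apply equivP_imp; auto | split; [apply equivP_imp; auto | split]].
    + intros a Ga [Fa _].
      destruct (proj2 HP uG a) as [h|h].
      * apply Ga. apply (pspec_closed P G SG uG); assumption.
      * assert (h' : P (((vF ==> uG) ==> a) ==> ((vF ==> uG) ==> uG)))
          by (apply (filter_mono P (proj1 HP) (a ==> uG)); [assumption | apply imp_trans_r]).
        destruct (pspec_prime P F SF _ _ (CF _ _ Fa h')); auto.
    + exact out.
Qed.

(* When G ⊆ F, x → y lies in Q and F ⊑→ G straddles [1]_Q. *)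
Lemma sqimp_straddle_sup (F G : L -> Prop) x y :
  PSpec L P F -> PSpec L P G -> (forall z, G z -> F z) ->
  straddles Q F x -> straddles Q G y -> straddles Q (sqimp L F G) (x ==> y).
Proof.
  intros SF SG GF Sx Sy.
  destruct Sx as [uF [vF [HuF [HvF [FuF FvF]]]]].
  destruct Sy as [uG [vG [HuG [HvG [GuG GvG]]]]].
  assert (Qxy : Q (x ==> y)).
  { destruct (proj2 HP vF uG) as [h|h].
    - eapply filter_trans; [assumption | apply HvF |].
      eapply filter_trans; [assumption | apply PsubQ, h | apply HuG].
    - exfalso. apply FvF. apply (pspec_closed P F SF uG); auto. }
  exists mvone, (uG ==> vG). split; [|split; [|split]].
  - apply equivP_sym, equivP_mem; [assumption | apply HQ | exact Qxy].
  - apply equivP_mem; [assumption | exact Qxy |].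
    eapply filter_trans; [assumption | apply HuG | apply HvG].
  - apply sqimp_one.
  - apply sqimp_out; auto; apply pspec_up with P; assumption.
Qed.

Lemma qQ_sqimp (F G : L -> Prop) x y :
  PSpec L P F -> PSpec L P G -> straddles Q F x -> straddles Q G y ->
  qQ L Q (sqimp L F G) = coset_imp L Q (qQ L Q F) (qQ L Q G).
Proof.
  intros SF SG Sx Sy.
  pose proof (pspec_closed P F SF) as CF. pose proof (pspec_closed P G SG) as CG.
  rewrite (qQ_straddle P Q HP HQ PsubQ F x CF Sx), (qQ_straddle P Q HP HQ PsubQ G y CG Sy),
    coset_impE by assumption.
  apply (qQ_straddle P Q); auto; [apply sqimp_closed; [apply HP | assumption ..]|].
  destruct (Pclosed_comparable P HP F G CF CG);
    [apply sqimp_straddle_sub | apply sqimp_straddle_sup]; assumption.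
Qed.

(* If F ⊆ G and F ⊑→ G = P then q_Q(F) = q_Q(G).  Otherwise q ∈ F ⊑→ G for
   any q ∈ Q \ P: an a ∉ G with q → a ∈ F ∩ G would straddle both F and G. *)
Lemma qQ_sqimp_kernel (F G : L -> Prop) q :
  Pclosed P F -> Pclosed P G -> (forall z, F z -> G z) -> Q q -> ~ P q ->
  sqimp L F G = P -> qQ L Q F = qQ L Q G.
Proof.
  intros CF CG FG Qq Pq E. apply NNPP; intro N. apply Pq. rewrite <- E.
  intros a Ga [Fa _]. apply N.
  assert (Sa : forall H, H (q ==> a) -> ~ H a -> straddles Q H a).
  { intros H Hin Hout. exists (q ==> a), a.
    split; [apply equivP_imp_left | split; [apply equivP_refl |]]; auto. }
  rewrite (qQ_straddle P Q HP HQ PsubQ F a), (qQ_straddle P Q HP HQ PsubQ G a); auto.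
Qed.

End Equations.

Theorem mainTheorem19 (L : MVAlgebra) (P Q : L -> Prop) :
  prime_impl_filter L P -> prime_impl_filter L Q ->
  (forall z, P z -> Q z) -> (exists z, Q z /\ ~ P z) ->
  forall F G : L -> Prop, PSpec L P F -> PSpec L P G ->
    qQ L Q (Fplus L F) = coset_neg L Q (qQ L Q F) /\
    qQ L Q (sqimp L F G) = coset_imp L Q (qQ L Q F) (qQ L Q G) /\
    (hat_equiv L P F G -> qQ L Q F = qQ L Q G).
Proof.
  intros HP [HQ _] PsubQ [q [Qq Pq]] F G SF SG.
  pose proof (pspec_closed P F SF) as CF. pose proof (pspec_closed P G SG) as CG.
  destruct (pspec_straddle P F SF Q q HQ Qq Pq) as [x Sx].
  destruct (pspec_straddle P G SG Q q HQ Qq Pq) as [y Sy].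
  split; [|split].
  - apply qQ_Fplus with P x; assumption.
  - apply qQ_sqimp with P x y; assumption.
  - intros [EFG EGF].
    destruct (Pclosed_comparable P HP F G CF CG) as [FG | GF].
    + apply qQ_sqimp_kernel with P q; assumption.
    + symmetry. apply qQ_sqimp_kernel with P q; assumption.
Qed.
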